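(* Let $f:\mathit{Ref}\to\mathit{Expr}$ be a well-formed spreadsheet and let $\mathcal{L}=\{l : l \text{ is a label used in } f(r) \text{ for some } r\in\mathit{Ref}\}$. Then there are $|\mathcal{L}|$ or fewer random variables that cover all random variables used by the executions of $f$; i.e., every random draw made during any execution of $f$ (from the empty state $\emptyset$ to a state with domain $\mathit{Ref}$) is the draw at some labelled application whose label belongs to $\mathcal{L}$, and each such label is used for at most one draw per execution.
   Context: Expressions of the abstract spreadsheet language are generated by the grammar $$e ::= c \mid r \mid \mathit{op}_l(e_1,\dots,e_n) \mid \mathbf{if}\; e_1\, e_2\, e_3 \mid \mathbf{obs}(c, \mathit{erp}_l(e_1,\dots,e_n)),\qquad \mathit{op} ::= \mathit{prim} \mid \mathit{black} \mid \mathit{erp},$$ where $c$ ranges over constant numbers, $r$ over cell references, $l$ over labels (each application carries a unique label), $\mathit{prim}$ over deterministic primitive operators, $\mathit{black}$ over user-defined (possibly stochastic) black-box operators, and $\mathit{erp}$ over elementary random procedures (Gaussian, Choice, Between, Near). A spreadsheet is a finite map $f:\mathit{Ref}\to\mathit{Expr}$; it is well-formed if the directed graph on $\mathit{Ref}$ with edges $\{(r,r'): r\text{ occurs in } f(r')\}$ is acyclic. Fix a topological enumeration of $\mathit{Ref}$ and write $\prec$ for its order. A state $\rho$ is a map from a $\prec$-downward-closed subset $\mathrm{dom}(\rho)\subseteq\mathit{Ref}$ to numbers. Evaluation $e\Downarrow_\rho c,(p,q,\Lambda,L)$ evaluates expression $e$ in state $\rho$ to a number $c$, with $L$ the sequence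 of labels of the applications at which random values were sampled or observed: a reference $r$ evaluates to $\rho(r)$ with $L=[]$; $\mathit{prim}_l(e_1,\dots,e_n)$ evaluates the arguments and applies $\mathit{prim}$, with $L$ the concatenation of the arguments' sequences; $\mathit{black}_l(e_1,\dots,e_n)$ evaluates the arguments, samples $c\sim\mathit{black}(c_1,\dots,c_n)$, and has $L=\mathit{concat}(L_1,\dots,L_n,[l])$; $\mathit{erp}_l(e_1,\dots,e_n)$ evaluates the arguments, samples $c$ from a proposal distribution associated with $l$, and has $L=\mathit{concat}(L_1,\dots,L_n,[l])$; $\mathbf{if}\;e_1\,e_2\,e_3$ evaluates $e_1$ and then $e_2$ if the result is nonzero, otherwise $e_3$, with $L$ the concatenation of the two evaluated subexpressions' sequences; $\mathbf{obs}(c,\mathit{erp}_l(e_1,\dots,e_n))$ evaluates the arguments, returns $c$ and has $L=\mathit{concat}(L_1,\dots,L_n,[l])$. (The components $p,q$ are accumulated log densities and $\Lambda$ gradient information.) A one-step spreadsheet evaluation $\rho\xrightarrow{p,q,\Lambda,L}_f\rho'$ picks the $\prec$-least $r\in\mathit{Ref}\setminus\mathrm{dom}(\rho)$, evaluates $f(r)\Downarrow_\rho c,(p,q,\Lambda,L)$, and sets $\rho'=\rho[r:c]$. An execution of $f$ is a sequence $\emptyset=\rho_1\xrightarrow{}_f\rho_2\cdots\xrightarrow{}_f\rho_{m+1}$ with $\mathrm{dom}(\rho_{m+1})=\mathit{Ref}$; the random variables it uses are those sampled at the labels in the recorded sequences $L_1,\dots,L_m$. *)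

From Stdlib Require Import Reals List Relations.
Import ListNotations.
Open Scope R_scope.

Inductive erp : Type := Gaussian | Choice | Between | Near.

Section Spreadsheet.
(* Ref: cell references; Lab: labels; PrimT: deterministic primitives;
   BlackT: user-defined (possibly stochastic) black-box operators. *)
Variables (Ref Lab PrimT BlackT : Type).

Inductive op : Type :=
  | Prim (p : PrimT)
  | Black (b : BlackT)
  | Erp (d : erp).

Inductive expr : Type :=
  | Const (c : R)
  | RefE (r : Ref)
  | App (o : op) (l : Lab) (args : list expr)
  | If (e1 e2 e3 : expr)
  | Obs (c : R) (d : erp) (l : Lab) (args : list expr).  (* obs(c, erp_l(e1..en)) *)

Fixpoint labels (e : expr) : list Lab :=
  match e with
  | Const _ => []
  | RefE _ => []
  | App _ l args =>
      (fix go (a : list expr) : list Lab :=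
         match a with [] => [] | x :: xs => labels x ++ go xs end) args ++ [l]
  | If e1 e2 e3 => labels e1 ++ labels e2 ++ labels e3
  | Obs _ _ l args =>
      (fix go (a : list expr) : list Lab :=
         match a with [] => [] | x :: xs => labels x ++ go xs end) args ++ [l]
  end.

Fixpoint refs (e : expr) : list Ref :=
  match e with
  | Const _ => []
  | RefE r => [r]
  | App _ _ args =>
      (fix go (a : list expr) : list Ref :=
         match a with [] => [] | x :: xs => refs x ++ go xs end) args
  | If e1 e2 e3 => refs e1 ++ refs e2 ++ refs e3
  | Obs _ _ _ args =>
      (fix go (a : list expr) : list Ref :=
         match a with [] => [] | x :: xs => refs x ++ go xs end) args
  end.

Definition spreadsheet := Ref -> expr.

Definition dep_edge (f : spreadsheet) (r r' : Ref) : Prop := In r (refs (f r')).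
Definition well_formed (f : spreadsheet) : Prop :=
  forall r, ~ clos_trans Ref (dep_edge f) r r.

Definition prec (ord : list Ref) (r r' : Ref) : Prop :=
  exists i j, nth_error ord i = Some r /\ nth_error ord j = Some r' /\ (i < j)%nat.

Definition topological_enumeration (f : spreadsheet) (ord : list Ref) : Prop :=
  NoDup ord /\ (forall r, In r ord) /\
  (forall r r', dep_edge f r r' -> prec ord r r').

Definition state := Ref -> option R.
Definition empty_state : state := fun _ => None.

Variable Ref_eq_dec : forall r r' : Ref, {r = r'} + {r <> r'}.
Definition upd (rho : state) (r : Ref) (c : R) : state :=
  fun r' => if Ref_eq_dec r' r then Some c else rho r'.

(* semantics parameters: primitive functions, support of black boxes,
   and the proposal distribution (support) associated with each label *)
Variable prim_sem : PrimT -> list R -> R.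
Variable black_sample : BlackT -> list R -> R -> Prop.
Variable erp_proposal : Lab -> erp -> list R -> R -> Prop.

(* e ⇓_rho c, L  (the density / gradient components are omitted) *)
Inductive eval (rho : state) : expr -> R -> list Lab -> Prop :=
  | ev_const c : eval rho (Const c) c []
  | ev_ref r c : rho r = Some c -> eval rho (RefE r) c []
  | ev_prim p l args cs Ls :
      evals rho args cs Ls ->
      eval rho (App (Prim p) l args) (prim_sem p cs) (concat Ls)
  | ev_black b l args cs Ls c :
      evals rho args cs Ls -> black_sample b cs c ->
      eval rho (App (Black b) l args) c (concat Ls ++ [l])
  | ev_erp d l args cs Ls c :
      evals rho args cs Ls -> erp_proposal l d cs c ->
      eval rho (App (Erp d) l args) c (concat Ls ++ [l])
  | ev_if_true e1 e2 e3 c1 L1 c L2 :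
      eval rho e1 c1 L1 -> c1 <> 0 -> eval rho e2 c L2 ->
      eval rho (If e1 e2 e3) c (L1 ++ L2)
  | ev_if_false e1 e2 e3 c1 L1 c L3 :
      eval rho e1 c1 L1 -> c1 = 0 -> eval rho e3 c L3 ->
      eval rho (If e1 e2 e3) c (L1 ++ L3)
  | ev_obs c d l args cs Ls :
      evals rho args cs Ls ->
      eval rho (Obs c d l args) c (concat Ls ++ [l])
with evals (rho : state) : list expr -> list R -> list (list Lab) -> Prop :=
  | evs_nil : evals rho [] [] []
  | evs_cons e es c cs L Ls :
      eval rho e c L -> evals rho es cs Ls -> evals rho (e :: es) (c :: cs) (L :: Ls).

Definition step (f : spreadsheet) (ord : list Ref) (rho : state) (L : list Lab)
    (rho' : state) : Prop :=
  exists r c,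
    rho r = None /\
    (forall r', rho r' = None -> r' <> r -> prec ord r r') /\
    eval rho (f r) c L /\
    rho' = upd rho r c.

Inductive run (f : spreadsheet) (ord : list Ref) : state -> list (list Lab) -> state -> Prop :=
  | run_nil rho : run f ord rho [] rho
  | run_cons rho L rho1 Ls rho2 :
      step f ord rho L rho1 -> run f ord rho1 Ls rho2 -> run f ord rho (L :: Ls) rho2.

Definition execution (f : spreadsheet) (ord : list Ref) (Ls : list (list Lab)) : Prop :=
  exists rho', run f ord empty_state Ls rho' /\ forall r, rho' r <> None.

Definition all_labels (f : spreadsheet) (ord : list Ref) : list Lab :=
  flat_map (fun r => labels (f r)) ord.

End Spreadsheet.

Arguments Const {Ref Lab PrimT BlackT}.
Arguments well_formed {Ref Lab PrimT BlackT}.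
Arguments topological_enumeration {Ref Lab PrimT BlackT}.
Arguments all_labels {Ref Lab PrimT BlackT}.
Arguments execution {Ref Lab PrimT BlackT}.
Arguments step {Ref Lab PrimT BlackT}.
Arguments run {Ref Lab PrimT BlackT}.
Arguments eval {Ref Lab PrimT BlackT}.
Arguments evals {Ref Lab PrimT BlackT}.

(* Each cell is evaluated exactly once in an execution, and evaluating an
   expression records every label at most once, and only labels occurring in
   it. Hence the recorded labels, as a multiset, are contained in the multiset
   of labels of the cells, which is duplicate-free by hypothesis. *)

From Pilot Require Import Defs.
From Stdlib Require Import Reals List Relations Permutation Lia.
Import ListNotations.

Section Submultiset.
Variable A : Type.

Definition submultiset (x y : list A) : Prop := exists z, Permutation (x ++ z) y.

Lemma submultiset_refl x : submultiset x x.
Proof. exists []; rewrite app_nil_r; reflexivity. Qed.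

Lemma submultiset_app x1 y1 x2 y2 :
  submultiset x1 y1 -> submultiset x2 y2 -> submultiset (x1 ++ x2) (y1 ++ y2).
Proof.
  intros [z1 H1] [z2 H2]; exists (z1 ++ z2).
  rewrite <- H1, <- H2, <- !app_assoc.
  apply Permutation_app_head, Permutation_app_swap_app.
Qed.

Lemma submultiset_appr x y z : submultiset x y -> submultiset x (y ++ z).
Proof. intros [w H]; exists (w ++ z); rewrite app_assoc; now apply Permutation_app_tail. Qed.

Lemma submultiset_appl x y z : submultiset x y -> submultiset x (z ++ y).
Proof. intros [w H]; exists (w ++ z); rewrite app_assoc, H; apply Permutation_app_comm. Qed.

Lemma submultiset_Permutation_r x y y' :
  submultiset x y -> Permutation y y' -> submultiset x y'.
Proof. intros [z H] Hy; exists z; now rewrite H. Qed.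

Lemma submultiset_incl x y : submultiset x y -> incl x y.
Proof. intros [z H] a Ha; apply (Permutation_in _ H), in_or_app; now left. Qed.

Lemma submultiset_NoDup x y : submultiset x y -> NoDup y -> NoDup x.
Proof.
  intros [z H] Hy; apply (NoDup_app_remove_r _ z).
  exact (Permutation_NoDup (Permutation_sym H) Hy).
Qed.

Lemma submultiset_length x y : submultiset x y -> (length x <= length y)%nat.
Proof. intros [z H]; apply Permutation_length in H; rewrite length_app in H; lia. Qed.

Lemma Permutation_flat_map_filter_drop {B} (g : A -> list B) (p q : A -> bool) s a :
  NoDup s -> In a s -> p a = true -> q a = false ->
  (forall b, b <> a -> q b = p b) ->
  Permutation (flat_map g (filter p s)) (g a ++ flat_map g (filter q s)).
Proof.
  intros Hs Ha Hpa Hqa Hqp; induction s as [|b s IH]; [destruct Ha|].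
  apply NoDup_cons_iff in Hs as [Hb Hs].
  destruct Ha as [<- | Ha]; cbn; rewrite ?Hpa, ?Hqa; cbn.
  - apply Permutation_app_head; rewrite (filter_ext_in q p); [reflexivity|].
    intros c Hc; apply Hqp; intros ->; contradiction.
  - assert (Hba : b <> a) by (intros ->; contradiction).
    rewrite (Hqp b Hba); destruct (p b); cbn; rewrite (IH Hs Ha); [|reflexivity].
    apply Permutation_app_swap_app.
Qed.

End Submultiset.

Arguments submultiset {A}.

Section Labels.
Variables (Ref Lab PrimT BlackT : Type)
  (Ref_eq_dec : forall r r' : Ref, {r = r'} + {r <> r'})
  (prim_sem : PrimT -> list R -> R)
  (black_sample : BlackT -> list R -> R -> Prop)
  (erp_proposal : Lab -> erp -> list R -> R -> Prop).

Notation expr := (expr Ref Lab PrimT BlackT).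
Notation labels := (labels Ref Lab PrimT BlackT).
Notation eval := (eval prim_sem black_sample erp_proposal).

(* Convertible to the local [fix] computing the labels of an argument list
   inside [labels]. *)
Fixpoint labels_args (es : list expr) : list Lab :=
  match es with [] => [] | e :: es => labels e ++ labels_args es end.

Scheme eval_mut := Induction for Defs.eval Sort Prop
  with evals_mut := Induction for Defs.evals Sort Prop.

Lemma eval_labels_submultiset rho e c L :
  eval rho e c L -> submultiset L (labels e).
Proof.
  revert e c L.
  apply (eval_mut Ref Lab PrimT BlackT prim_sem black_sample erp_proposal rho
           (fun e _ L _ => submultiset L (labels e))
           (fun es _ Ls _ => submultiset (concat Ls) (labels_args es)));
    intros; cbn -[labels]; try apply submultiset_refl.
  - now apply submultiset_appr.
  - now apply submultiset_app; [|apply submultiset_refl].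
  - now apply submultiset_app; [|apply submultiset_refl].
  - now apply submultiset_app; [|apply submultiset_appr].
  - now apply submultiset_app; [|apply submultiset_appl].
  - now apply submultiset_app; [|apply submultiset_refl].
  - now apply submultiset_app.
Qed.

Definition pending (rho : state Ref) (ord : list Ref) : list Ref :=
  filter (fun r => match rho r with None => true | Some _ => false end) ord.

Lemma pending_empty ord : pending (empty_state Ref) ord = ord.
Proof. unfold pending, empty_state; induction ord as [|r ord IH]; cbn; congruence. Qed.

Lemma pending_labels_upd (f : spreadsheet Ref Lab PrimT BlackT) ord rho r c :
  NoDup ord -> In r ord -> rho r = None ->
  Permutation (flat_map (fun r => labels (f r)) (pending rho ord))
    (labels (f r) ++
     flat_map (fun r => labels (f r)) (pending (upd Ref Ref_eq_dec rho r c) ord)).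
Proof.
  intros Hord Hr Hrho; apply (Permutation_flat_map_filter_drop _ (fun r => labels (f r))); auto.
  - now rewrite Hrho.
  - unfold upd; now destruct Ref_eq_dec.
  - intros r' Hr'; unfold upd; now destruct Ref_eq_dec.
Qed.

Lemma run_labels_submultiset f ord rho Ls rho' :
  NoDup ord -> (forall r, In r ord) ->
  run Ref_eq_dec prim_sem black_sample erp_proposal f ord rho Ls rho' ->
  submultiset (concat Ls) (flat_map (fun r => labels (f r)) (pending rho ord)).
Proof.
  intros Hord Hall Hrun; induction Hrun as [rho | rho L rho1 Ls rho2 Hstep _ IH].
  - exists (flat_map (fun r => labels (f r)) (pending rho ord)); reflexivity.
  - destruct Hstep as (r & c & Hr & _ & Hev & ->).
    eapply submultiset_Permutation_r.
    + exact (submultiset_app _ _ _ _ _ (eval_labels_submultiset _ _ _ _ Hev) IH).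
    + symmetry; now apply pending_labels_upd.
Qed.

End Labels.

Theorem mainTheorem2
  (Ref Lab PrimT BlackT : Type)
  (Ref_eq_dec : forall r r' : Ref, {r = r'} + {r <> r'})
  (prim_sem : PrimT -> list R -> R)
  (black_sample : BlackT -> list R -> R -> Prop)
  (erp_proposal : Lab -> erp -> list R -> R -> Prop)
  (f : spreadsheet Ref Lab PrimT BlackT) (ord : list Ref)
  (Hwf : well_formed f)
  (Htopo : topological_enumeration f ord)
  (Huniq : NoDup (all_labels f ord)) :
  forall Ls : list (list Lab),
    execution Ref_eq_dec prim_sem black_sample erp_proposal f ord Ls ->
    (forall l, In l (concat Ls) -> In l (all_labels f ord)) /\
    NoDup (concat Ls) /\
    (length (concat Ls) <= length (all_labels f ord))%nat.
Proof.
  (* Acyclicity only guarantees that executions exist; the bound needs just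
     that [ord] enumerates every cell exactly once. *)
  intros Ls [rho' [Hrun _]].
  destruct Htopo as [Hord [Hall _]].
  assert (Hsub : submultiset (concat Ls) (all_labels f ord)).
  { unfold all_labels; rewrite <- (pending_empty Ref ord).
    exact (run_labels_submultiset _ _ _ _ _ _ _ _ _ _ _ _ _ Hord Hall Hrun). }
  split; [|split].
  - exact (submultiset_incl _ _ _ Hsub).
  - exact (submultiset_NoDup _ _ _ Hsub Huniq).
  - exact (submultiset_length _ _ _ Hsub).
Qed.
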